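(* Consider any run of Algorithm 1 (described in the context) under the standing assumption. Then: (i) if $k\in\mathcal{B}\cap\mathcal{S}$, then $f_k-f_{k+1}\ge\tfrac{\eta}{2}\epsilon_H\delta_k^2$; (ii) if $k\in\mathcal{I}\cap\mathcal{S}$, then \[ f_k-f_{k+1}\ \ge\ \tfrac{\eta}{2(1+2L_H)}\min\big\{\|g_{k+1}\|^2\epsilon_H^{-1},\ \epsilon_H^3\big\}. \]
   Context: Let $f:\mathbb{R}^n\to\mathbb{R}$ with gradient $g=\nabla f$ and Hessian $H=\nabla^2 f$; $\|\cdot\|$ is the Euclidean norm and $\lambda_{\min}(\cdot)$ the smallest eigenvalue of a symmetric matrix. Write $f_k=f(x_k)$, $g_k=g(x_k)$, $H_k=H(x_k)$ and $m_k(x):=f_k+g_k^T(x-x_k)+\tfrac12(x-x_k)^TH_k(x-x_k)$. Algorithm 1 (exact trust-region Newton method). Inputs: tolerances $\epsilon_g,\epsilon_H>0$; parameters $\gamma_1\in(0,1)$, $\gamma_2\in[1,\infty)$, $\psi\in(1/\gamma_2,1]$; $x_0\in\mathbb{R}^n$; $\delta_0>0$; $\delta_{\max}\ge\delta_0$; $\eta\in(0,1)$. For $k=0,1,2,\dots$: evaluate $g_k,H_k$; if $\|g_k\|\le\epsilon_g$, compute $\lambda_k=\lambda_{\min}(H_k)$ and, if $\lambda_k\ge-\epsilon_H$, return $x_k$ (terminate). Otherwise compute $s_k$ as a global solution of $\min_{s}\ m_k(x_k+s)+\tfrac12\epsilon_H\|s\|^2$ subject to $\|s\|\le\delta_k$.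 Set $\rho_k=\frac{f_k-f(x_k+s_k)}{m_k(x_k)-m_k(x_k+s_k)}$. If $\rho_k\ge\eta$: $x_{k+1}=x_k+s_k$, and $\delta_{k+1}=\min\{\gamma_2\delta_k,\delta_{\max}\}$ if $\|s_k\|\ge\psi\delta_k$, else $\delta_{k+1}=\delta_k$. If $\rho_k<\eta$: $x_{k+1}=x_k$ and $\delta_{k+1}=\gamma_1\|s_k\|$. $\mathcal{K}$ is the set of indices $k$ such that iteration $k$ is completed without termination; $\mathcal{S}=\{k\in\mathcal{K}:\rho_k\ge\eta\}$, $\mathcal{I}=\{k\in\mathcal{K}:\|s_k\|<\delta_k\}$, $\mathcal{B}=\{k\in\mathcal{K}:\|s_k\|=\delta_k\}$. Standing assumption: the sequence $\{f_k\}$ is bounded below by some $f_{\rm low}\in\mathbb{R}$, and all segments $[x_k,x_k+s_k]$ lie in an open set on which $f$ is twice continuously differentiable with gradient Lipschitz continuous with constant $L_g>0$ and Hessian Lipschitz continuous with constant $L_H>0$. *)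

From HB Require Import structures.
From mathcomp Require Import all_boot all_order all_algebra.
From mathcomp Require Import all_classical all_reals all_analysis.

Set Implicit Arguments.
Unset Strict Implicit.
Unset Printing Implicit Defensive.

Import Order.TTheory GRing.Theory Num.Theory.
Import numFieldNormedType.Exports.

Local Open Scope classical_set_scope.
Local Open Scope ring_scope.

Section Alg1Defs.
Variables (R : realType) (n : nat).
Local Notation vec := 'rV[R]_n.
Local Notation mat := 'M[R]_n.

Definition dotv (u v : vec) : R := \sum_(i < n) u 0 i * v 0 i.
Definition enorm (u : vec) : R := Num.sqrt (dotv u u).

Definition quadf (A : mat) (s : vec) : R := (s *m A *m s^T) 0 0.

Definition mxv (A : mat) (v : vec) : vec := (A *m v^T)^T.

Definition is_lambda_min (A : mat) (l : R) : Prop :=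
  eigenvalue A l /\ forall m, eigenvalue A m -> l <= m.

Definition segment (x y : vec) : set vec :=
  [set z | exists t : R, 0 <= t <= 1 /\ z = x + t *: (y - x)].

Definition C2_on (U : set vec) (f : vec -> R) (g : vec -> vec) (H : vec -> mat)
  : Prop :=
  forall x, U x ->
    [/\ differentiable f x, (forall v, 'd f x v = dotv (g x) v),
        differentiable g x & (forall v, 'd g x v = mxv (H x) v)] /\
    {for x, continuous H} /\ (H x)^T = H x.

Definition grad_lipschitz_on (U : set vec) (g : vec -> vec) (Lg : R) : Prop :=
  forall x y, U x -> U y -> enorm (g x - g y) <= Lg * enorm (x - y).

(* ||H x - H y||_2 <= LH ||x - y||, with the spectral (Euclidean operator) norm
   written out: ||(H x - H y) v|| <= LH ||x - y|| ||v|| for all v. *)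
Definition hess_lipschitz_on (U : set vec) (H : vec -> mat) (LH : R) : Prop :=
  forall x y v, U x -> U y ->
    enorm (mxv (H x - H y) v) <= LH * enorm (x - y) * enorm v.

Definition model (f : vec -> R) (g : vec -> vec) (H : vec -> mat) (x s : vec) : R :=
  f x + dotv (g x) s + 1 / 2 * quadf (H x) s.

Definition terminates (g : vec -> vec) (H : vec -> mat) (eps_g eps_H : R) (x : vec)
  : Prop :=
  enorm (g x) <= eps_g /\ (forall l, is_lambda_min (H x) l -> - eps_H <= l).

Definition inK (g : vec -> vec) (H : vec -> mat) (eps_g eps_H : R)
  (x : nat -> vec) (k : nat) : Prop :=
  forall j, (j <= k)%N -> ~ terminates g H eps_g eps_H (x j).

Definition tr_solution (f : vec -> R) (g : vec -> vec) (H : vec -> mat)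
  (eps_H : R) (x : vec) (delta : R) (s : vec) : Prop :=
  enorm s <= delta /\
  forall s', enorm s' <= delta ->
    model f g H x s + 1 / 2 * eps_H * enorm s ^+ 2
      <= model f g H x s' + 1 / 2 * eps_H * enorm s' ^+ 2.

Definition rho (f : vec -> R) (g : vec -> vec) (H : vec -> mat) (x s : vec) : R :=
  (f x - f (x + s)) / (model f g H x 0 - model f g H x s).

Definition alg1_step (f : vec -> R) (g : vec -> vec) (H : vec -> mat)
  (eps_H gamma1 gamma2 psi dmax eta : R)
  (x s : nat -> vec) (delta : nat -> R) (k : nat) : Prop :=
  tr_solution f g H eps_H (x k) (delta k) (s k) /\
  (if eta <= rho f g H (x k) (s k) then
     x k.+1 = x k + s k /\
     delta k.+1 = (if psi * delta k <= enorm (s k)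
                   then Num.min (gamma2 * delta k) dmax else delta k)
   else
     x k.+1 = x k /\ delta k.+1 = gamma1 * enorm (s k)).

End Alg1Defs.

(* Since [0] is feasible, the subproblem solution decreases the model by at
   least [eps_H/2 ||s_k||^2], and a successful step ([rho_k >= eta]) turns this
   into a decrease of [f] by [eta] times as much: this is (i).  For an interior
   step the constraint is inactive, so [g_k + H_k s_k + eps_H s_k = 0]; hence
   [g_(k+1)] is the first-order Taylor residual of [g] minus [eps_H s_k].  The
   Lipschitz Hessian bounds the residual by [L_H ||s_k||^2], so
   [||g_(k+1)|| <= L_H ||s_k||^2 + eps_H ||s_k||], and comparing [||s_k||] with
   [eps_H] turns this into (ii). *)

From HB Require Import structures.
From mathcomp Require Import all_boot all_order all_algebra.
From mathcomp Require Import all_classical all_reals all_analysis.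
From mathcomp Require Import lra ring.

Set Implicit Arguments.
Unset Strict Implicit.
Unset Printing Implicit Defensive.

Import Order.TTheory GRing.Theory Num.Theory.
Import numFieldNormedType.Exports.

Local Open Scope classical_set_scope.
Local Open Scope ring_scope.

Section Euclidean.
Variables (R : realType) (n : nat).
Implicit Types (u v w : 'rV[R]_n) (A B : 'M[R]_n) (a : R).

Lemma dotvC u v : dotv u v = dotv v u.
Proof. by apply: eq_bigr => i _; rewrite mulrC. Qed.

Lemma dotvDl u v w : dotv (u + v) w = dotv u w + dotv v w.
Proof. by rewrite /dotv -big_split; apply: eq_bigr => i _; rewrite mxE mulrDl. Qed.

Lemma dotvZl a u w : dotv (a *: u) w = a * dotv u w.
Proof. by rewrite /dotv mulr_sumr; apply: eq_bigr => i _; rewrite mxE mulrA. Qed.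

Lemma dotvNl u w : dotv (- u) w = - dotv u w.
Proof. by rewrite -scaleN1r dotvZl mulN1r. Qed.

Lemma dotvBl u v w : dotv (u - v) w = dotv u w - dotv v w.
Proof. by rewrite dotvDl dotvNl. Qed.

Lemma dotvDr u v w : dotv w (u + v) = dotv w u + dotv w v.
Proof. by rewrite !(dotvC w) dotvDl. Qed.

Lemma dotvZr a u w : dotv w (a *: u) = a * dotv w u.
Proof. by rewrite !(dotvC w) dotvZl. Qed.

Lemma dotvBr u v w : dotv w (u - v) = dotv w u - dotv w v.
Proof. by rewrite !(dotvC w) dotvBl. Qed.

Lemma dotv0r w : dotv w 0 = 0.
Proof. by rewrite -(scale0r 0) dotvZr mul0r. Qed.

Lemma dotvv_ge0 u : 0 <= dotv u u.
Proof. by apply: sumr_ge0 => i _; rewrite -expr2 sqr_ge0. Qed.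

Lemma dotvv_eq0 u : dotv u u = 0 -> u = 0.
Proof.
move=> /eqP; rewrite psumr_eq0 => [/allP u0|i _]; last by rewrite -expr2 sqr_ge0.
apply/matrixP => i j; rewrite mxE (ord1 i).
by have := u0 j (mem_index_enum j); rewrite /= -expr2 sqrf_eq0 => /eqP.
Qed.

Lemma enorm_ge0 u : 0 <= enorm u.
Proof. exact: sqrtr_ge0. Qed.

Lemma enorm_sqr u : enorm u ^+ 2 = dotv u u.
Proof. by rewrite sqr_sqrtr // dotvv_ge0. Qed.

Lemma enorm0 : enorm (0 : 'rV[R]_n) = 0.
Proof. by rewrite /enorm dotv0r sqrtr0. Qed.

Lemma enormZ a u : enorm (a *: u) = `|a| * enorm u.
Proof. by rewrite /enorm dotvZl dotvZr mulrA -expr2 sqrtrM ?sqr_ge0 // sqrtr_sqr. Qed.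

Lemma cauchy_schwarz u v : `|dotv u v| <= enorm u * enorm v.
Proof.
suff CS : dotv u v ^+ 2 <= dotv u u * dotv v v.
  rewrite -(ler_pXn2r (n := 2)) ?nnegrE ?mulr_ge0 ?enorm_ge0 //.
  by rewrite exprMn !enorm_sqr real_normK ?num_real.
have [v0|vn0] := eqVneq (dotv v v) 0.
  by rewrite (dotvv_eq0 v0) !dotv0r expr0n /= mulr0.
have vp : 0 < dotv v v by rewrite lt_neqAle eq_sym vn0 dotvv_ge0.
have := dotvv_ge0 (dotv v v *: u - dotv u v *: v).
rewrite !(dotvBl, dotvBr, dotvZl, dotvZr) (dotvC v u) => h.
have : 0 <= dotv v v * (dotv u u * dotv v v - dotv u v ^+ 2) by nra.
by rewrite pmulr_rge0 // subr_ge0.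
Qed.

Lemma ler_enormD u v : enorm (u + v) <= enorm u + enorm v.
Proof.
rewrite -(ler_pXn2r (n := 2)) ?nnegrE ?addr_ge0 ?enorm_ge0 //.
rewrite enorm_sqr !(dotvDl, dotvDr) (dotvC v u) sqrrD !enorm_sqr.
have := ler_norm (dotv u v); have := cauchy_schwarz u v; lra.
Qed.

Lemma mxvD A u v : mxv A (u + v) = mxv A u + mxv A v.
Proof. by rewrite /mxv linearD /= mulmxDr linearD. Qed.

Lemma mxvZ A a u : mxv A (a *: u) = a *: mxv A u.
Proof. by rewrite /mxv linearZ /= -scalemxAr linearZ. Qed.

Lemma mxvB A u v : mxv A (u - v) = mxv A u - mxv A v.
Proof. by rewrite -scaleN1r mxvD mxvZ scaleN1r. Qed.

Lemma mxvBl A B u : mxv (A - B) u = mxv A u - mxv B u.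
Proof. by rewrite /mxv mulmxBl linearB. Qed.

Lemma dotv_mxv u A v : dotv u (mxv A v) = (u *m A *m v^T) 0 0.
Proof. by rewrite -mulmxA /dotv mxE; apply: eq_bigr => i _; rewrite /mxv !mxE. Qed.

Lemma quadfE A u : quadf A u = dotv u (mxv A u).
Proof. by rewrite dotv_mxv. Qed.

Lemma dotv_mxv_sym A u v : A^T = A -> dotv u (mxv A v) = dotv v (mxv A u).
Proof.
move=> symA; rewrite !dotv_mxv -[in RHS]symA.
transitivity ((u *m A *m v^T)^T 0 0); first by rewrite [RHS]mxE.
by rewrite !trmx_mul trmxK mulmxA.
Qed.

End Euclidean.

Section Calculus.
Variables (R : realType) (n : nat).
Implicit Types (x s w : 'rV[R]_n) (t : R).

Lemma is_derive_dotv_line (g : 'rV[R]_n -> 'rV[R]_n) x s w t :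
  differentiable g (x + t *: s) ->
  is_derive t 1 (fun t => dotv w (g (x + t *: s))) (dotv w ('d g (x + t *: s) s)).
Proof.
move=> dg; pose G t := g (x + t *: s).
have G_quotient : (fun h : R => h^-1 *: ((G \o shift t) (h *: 1) - G t)) =
    (fun h : R => h^-1 *: ((g \o shift (x + t *: s)) (h *: s) - g (x + t *: s))).
  apply/funext => h /=; rewrite /G; congr (_ *: (g _ - _)).
  by rewrite [h%:A]mulr1 scalerDl addrCA.
have derG : derivable G t 1 by rewrite /derivable G_quotient; exact: diff_derivable.
have DG : 'D_1 G t = 'd g (x + t *: s) s.
  by rewrite /derive G_quotient -/(derive g (x + t *: s) s) deriveE.
have DGi i : is_derive t 1 (fun r : R => G r 0 i) ('d g (x + t *: s) s 0 i).
  apply: DeriveDef; first by move/derivable_mxP: derG; apply.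
  by rewrite -DG derive_mx // mxE.
have -> : (fun t => dotv w (g (x + t *: s))) = \sum_(i < n) (fun r => w 0 i *: G r 0 i).
  by apply/funext => r; rewrite fct_sumE.
exact: is_derive_sum.
Qed.

Lemma segment_left x y : segment x y x.
Proof. by exists 0; rewrite lexx ler01 scale0r addr0. Qed.

Lemma enorm_grad_taylor_le (U : set 'rV[R]_n) f g H LH x s : 0 <= LH ->
  segment x (x + s) `<=` U -> C2_on U f g H -> hess_lipschitz_on U H LH ->
  enorm (g (x + s) - g x - mxv (H x) s) <= LH * enorm s ^+ 2.
Proof.
(* Mean value theorem for [t |-> <r, g (x + t s)>], [r] being the residual itself. *)
move=> LH0 xsU C2f LipH; set r := g (x + s) - g x - mxv (H x) s.
have lineU t : 0 <= t <= 1 -> U (x + t *: s).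
  by move=> t01; apply: xsU; exists t; rewrite addrAC subrr add0r.
pose h t := dotv r (g (x + t *: s)).
have h' t : 0 <= t <= 1 -> is_derive t 1 h (dotv r (mxv (H (x + t *: s)) s)).
  move=> /lineU /C2f [[_ _ dg dgE] _]; rewrite -dgE; exact: is_derive_dotv_line.
have hcont : {within `[0, 1], continuous h}.
  apply: derivable_within_continuous => t; rewrite in_itv /= => t01.
  by have := h' t t01 => hd; exact: ex_derive.
have h'_open t : t \in `]0, 1[ -> is_derive t 1 h (dotv r (mxv (H (x + t *: s)) s)).
  by rewrite in_itv /= => /andP[t0 t1]; apply: h'; rewrite !ltW.
have [c /[!in_itv] /= /andP[c0 c1] hc] := MVT_segment ler01 h'_open hcont.
have rr : dotv r r = dotv r (mxv (H (x + c *: s) - H x) s).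
  move: hc; rewrite /h scale1r scale0r addr0 subr0 mulr1 => hc.
  by rewrite {2}/r !dotvBr hc mxvBl dotvBr.
have Hdiff : enorm (mxv (H (x + c *: s) - H x) s) <= LH * enorm s ^+ 2.
  have Uc : U (x + c *: s) by apply: lineU; rewrite c0 c1.
  have Ux : U x by apply: xsU; exact: segment_left.
  apply: le_trans (LipH _ _ s Uc Ux) _.
  rewrite addrAC subrr add0r enormZ ger0_norm //.
  have := mulr_ge0 LH0 (sqr_ge0 (enorm s)); nra.
have : enorm r ^+ 2 <= enorm r * (LH * enorm s ^+ 2).
  rewrite enorm_sqr rr; apply: le_trans (ler_norm _) _.
  by apply: le_trans (cauchy_schwarz _ _) _; rewrite ler_wpM2l ?enorm_ge0.
have := enorm_ge0 r; have := mulr_ge0 LH0 (sqr_ge0 (enorm s)); nra.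
Qed.

End Calculus.

Section RealInequalities.
Variable R : realFieldType.
Implicit Types a c d q e L sigma G eta : R.

Lemma le0_of_le_small_multiples c q (t0 : R) : 0 < t0 ->
  (forall t, 0 < t <= t0 -> c <= t * q) -> c <= 0.
Proof.
move=> t0_gt0 small; rewrite leNgt; apply/negP => c_gt0.
have k_gt0 : 0 < 2 * (`|q| + 1) by have := normr_ge0 q; lra.
pose t := Num.min t0 (c / (2 * (`|q| + 1))).
have t_gt0 : 0 < t by rewrite lt_min t0_gt0 divr_gt0.
have := small t; rewrite t_gt0 ge_min lexx /= => /(_ isT) ctq.
have tk : t * (2 * (`|q| + 1)) <= c by rewrite -ler_pdivlMr // ge_min lexx orbT.
have : t * q <= t * `|q| by rewrite ler_pM2l // ler_norm.
nra.
Qed.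

(* With a vanishing denominator [a / 0 = 0], which [0 < eta] rules out. *)
Lemma mulr_le_of_le_div eta a d : 0 < eta -> 0 <= d -> eta <= a / d -> eta * d <= a.
Proof.
move=> eta_gt0; rewrite le_eqVlt => /predU1P[<-|d_gt0]; last by rewrite ler_pdivlMr.
by rewrite invr0 mulr0 => /(lt_le_trans eta_gt0); rewrite ltxx.
Qed.

Lemma min_sqr_div_cube_le e L sigma G : 0 < e -> 0 < L -> 0 <= sigma -> 0 <= G ->
  G <= L * sigma ^+ 2 + e * sigma ->
  Num.min (G ^+ 2 / e) (e ^+ 3) <= (1 + 2 * L) * e * sigma ^+ 2.
Proof.
move=> e_gt0 L_gt0 sigma_ge0 G_ge0 G_le.
have G2_le : G ^+ 2 <= (L * sigma ^+ 2 + e * sigma) ^+ 2.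
  by rewrite ler_pXn2r ?nnegrE // (le_trans G_ge0).
have [e_le|sigma_lt] := leP e sigma.
  rewrite ge_min; apply/orP; right.
  have : e ^+ 2 <= sigma ^+ 2 by rewrite ler_pXn2r // ?nnegrE ltW.
  rewrite exprSr; nra.
have [small|large] := leP (L * sigma ^+ 2 + e * sigma) (e ^+ 2).
  rewrite ge_min; apply/orP; left; rewrite ler_pdivrMr //.
  apply: (le_trans G2_le).
  have -> : (L * sigma ^+ 2 + e * sigma) ^+ 2 = sigma ^+ 2 * (L * sigma + e) ^+ 2 by ring.
  have : (L * sigma + e) ^+ 2 <= (1 + 2 * L) * e ^+ 2.
    have : L * (L * sigma ^+ 2 + 2 * sigma * e) <= L * (e ^+ 2 + e * sigma).
      by rewrite ler_pM2l //; nra.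
    nra.
  have := sqr_ge0 sigma; nra.
rewrite ge_min; apply/orP; right.
have -> : (1 + 2 * L) * e * sigma ^+ 2 =
    e ^+ 3 + e * ((sigma - e) ^+ 2 + 2 * (L * sigma ^+ 2 + e * sigma - e ^+ 2)) by ring.
have := sqr_ge0 (sigma - e); nra.
Qed.

End RealInequalities.

Section TrustRegionStep.
Variables (R : realType) (n : nat).
Variables (f : 'rV[R]_n -> R) (g : 'rV[R]_n -> 'rV[R]_n) (H : 'rV[R]_n -> 'M[R]_n).
Variables (eps delta : R) (x s : 'rV[R]_n).
Hypothesis s_opt : tr_solution f g H eps x delta s.

Definition reg_model (u : 'rV[R]_n) : R :=
  model f g H x u + 1 / 2 * eps * enorm u ^+ 2.

Lemma reg_model_shift (w : 'rV[R]_n) (t : R) : (H x)^T = H x ->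
  reg_model (s - t *: w) = reg_model s - t * dotv (g x + mxv (H x) s + eps *: s) w
    + t ^+ 2 * (1 / 2 * (dotv w (mxv (H x) w) + eps * dotv w w)).
Proof.
move=> symH; rewrite /reg_model /model !quadfE !enorm_sqr.
rewrite !(mxvB, mxvZ, dotvDl, dotvBl, dotvBr, dotvNl, dotvZl, dotvZr).
by rewrite (dotv_mxv_sym s w symH) (dotvC w s) (dotvC (mxv _ _) w); field.
Qed.

Lemma tr_solution_model_decrease :
  1 / 2 * eps * enorm s ^+ 2 <= model f g H x 0 - model f g H x s.
Proof.
have [s_le s_min] := s_opt.
have := s_min 0; rewrite enorm0 (le_trans (enorm_ge0 s) s_le) => /(_ isT).
rewrite expr0n /= mulr0 addr0; lra.
Qed.

Lemma tr_solution_interior_stationary : (H x)^T = H x -> enorm s < delta ->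
  g x + mxv (H x) s + eps *: s = 0.
Proof.
move=> symH s_lt; have [_ s_min] := s_opt.
set w := g x + mxv (H x) s + eps *: s; apply: dotvv_eq0; apply/eqP.
rewrite eq_le dotvv_ge0 andbT.
(* Moving from [s] along [- w] stays feasible for small [t > 0] and lowers the
   objective by [t ||w||^2] up to [O(t^2)]. *)
have w1_gt0 : 0 < enorm w + 1 by have := enorm_ge0 w; lra.
apply: (le0_of_le_small_multiples (q := 1 / 2 * (dotv w (mxv (H x) w) + eps * dotv w w))
  (t0 := (delta - enorm s) / (enorm w + 1))); first by rewrite divr_gt0 // subr_gt0.
move=> t /andP[t_gt0 t_le].
have feasible : enorm (s - t *: w) <= delta.
  apply: le_trans (ler_enormD _ _) _; rewrite -scaleNr enormZ normrN gtr0_norm //.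
  move: t_le; rewrite ler_pdivlMr //; have := enorm_ge0 w; nra.
have := s_min _ feasible; rewrite -/(reg_model _) -/(reg_model _) reg_model_shift //.
rewrite -/w expr2 -mulrA; nra.
Qed.

Lemma successful_step_decrease (eta : R) : 0 < eta -> 0 <= eps ->
  eta <= rho f g H x s -> eta / 2 * eps * enorm s ^+ 2 <= f x - f (x + s).
Proof.
move=> eta_gt0 eps_ge0 rho_ge; have decr := tr_solution_model_decrease.
have half_ge0 : 0 <= 1 / 2 * eps * enorm s ^+ 2 by have := sqr_ge0 (enorm s); nra.
apply: le_trans (mulr_le_of_le_div eta_gt0 (le_trans half_ge0 decr) rho_ge).
have -> : eta / 2 * eps * enorm s ^+ 2 = eta * (1 / 2 * eps * enorm s ^+ 2) by field.
by rewrite ler_pM2l.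
Qed.

Lemma interior_step_grad_le (U : set 'rV[R]_n) (LH : R) : 0 <= eps -> 0 <= LH ->
  segment x (x + s) `<=` U -> C2_on U f g H -> hess_lipschitz_on U H LH ->
  enorm s < delta -> enorm (g (x + s)) <= LH * enorm s ^+ 2 + eps * enorm s.
Proof.
move=> eps_ge0 LH_ge0 xsU C2f LipH s_lt.
have symH : (H x)^T = H x by have [_ []] := C2f x (xsU _ (segment_left x (x + s))).
have stat := tr_solution_interior_stationary symH s_lt.
have -> : g (x + s) = (g (x + s) - g x - mxv (H x) s) + (- eps) *: s.
  by rewrite scaleNr -!addrA -!opprD addrA stat oppr0 addr0.
apply: le_trans (ler_enormD _ _) _; rewrite enormZ normrN ger0_norm //.
by rewrite lerD2r (enorm_grad_taylor_le LH_ge0 xsU C2f LipH).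
Qed.

End TrustRegionStep.

Theorem lemma2p3 (R : realType) (n : nat)
  (f : 'rV[R]_n -> R) (g : 'rV[R]_n -> 'rV[R]_n) (H : 'rV[R]_n -> 'M[R]_n)
  (eps_g eps_H gamma1 gamma2 psi delta0 dmax eta flow Lg LH : R)
  (U : set 'rV[R]_n) (x s : nat -> 'rV[R]_n) (delta : nat -> R) :
  0 < eps_g -> 0 < eps_H ->
  0 < gamma1 < 1 -> 1 <= gamma2 -> gamma2^-1 < psi <= 1 ->
  0 < delta0 -> delta0 <= dmax -> 0 < eta < 1 ->
  delta 0%N = delta0 ->
  (* the algorithm: every completed iteration follows Algorithm 1 *)
  (forall k, inK g H eps_g eps_H x k ->
     alg1_step f g H eps_H gamma1 gamma2 psi dmax eta x s delta k) ->
  (* standing assumption *)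
  (forall k, (forall j, (j < k)%N -> ~ terminates g H eps_g eps_H (x j)) ->
     flow <= f (x k)) ->
  open U ->
  (forall k, inK g H eps_g eps_H x k -> segment (x k) (x k + s k) `<=` U) ->
  C2_on U f g H ->
  0 < Lg -> grad_lipschitz_on U g Lg ->
  0 < LH -> hess_lipschitz_on U H LH ->
  forall k, inK g H eps_g eps_H x k ->
    eta <= rho f g H (x k) (s k) ->
    (enorm (s k) = delta k ->
       eta / 2 * eps_H * delta k ^+ 2 <= f (x k) - f (x k.+1)) /\
    (enorm (s k) < delta k ->
       eta / (2 * (1 + 2 * LH)) *
         Num.min (enorm (g (x k.+1)) ^+ 2 / eps_H) (eps_H ^+ 3)
       <= f (x k) - f (x k.+1)).
Proof.
move=> _ eH_gt0 _ _ _ _ _ /andP[eta_gt0 _] _ alg _ _ segU C2f _ _ LH_gt0 LipH k Kk rho_ge.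
have [s_opt] := alg k Kk; rewrite rho_ge => -[-> _].
have decr := successful_step_decrease s_opt eta_gt0 (ltW eH_gt0) rho_ge.
split=> [<- // | s_lt].
have grad_le := interior_step_grad_le s_opt (ltW eH_gt0) (ltW LH_gt0) (segU k Kk) C2f LipH s_lt.
apply: le_trans decr; have c_gt0 : 0 < 1 + 2 * LH by lra.
have -> : eta / 2 * eps_H * enorm (s k) ^+ 2 =
    eta / (2 * (1 + 2 * LH)) * ((1 + 2 * LH) * eps_H * enorm (s k) ^+ 2).
  by field; rewrite gt_eqF.
rewrite ler_pM2l ?divr_gt0 ?mulr_gt0 //.
exact: min_sqr_div_cube_le eH_gt0 LH_gt0 (enorm_ge0 _) (enorm_ge0 _) grad_le.
Qed.
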